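(* Let $\mathcal{M}(Y,r)$ be a matroid of rank $k$ on ground set $Y=\{y_1,\dots,y_m\}$, and let $\mathcal{I}_{\mathcal{M}}(Z,\mathcal{R})$ be the corresponding generalized index coding problem (defined in the context). Then $\mathcal{M}$ has a linear representation over $\mathbb{F}_2$ if and only if there exists a perfect scalar linear index code for $\mathcal{I}_{\mathcal{M}}(Z,\mathcal{R})$ over $\mathbb{F}_2$.
   Context: For a matroid $\mathcal{M}$, $\mathcal{B}(\mathcal{M})$ denotes its set of bases and $\mathfrak{C}(\mathcal{M})$ its set of circuits. $\mathcal{M}$ has a linear representation over $\mathbb{F}_2$ if there is a matrix over $\mathbb{F}_2$ with columns indexed by $Y$ such that for every $S\subseteq Y$ the rank of the submatrix of columns indexed by $S$ equals $r(S)$. The problem $\mathcal{I}_{\mathcal{M}}(Z,\mathcal{R})$: messages $Z=Y\cup X$ with $X=\{x_1,\dots,x_k\}$, each message in $\mathbb{F}_2$. Receivers are pairs (demanded message, Has-set); $\mathcal{R}=R_1\cup R_2\cup R_3$ with $R_1=\{(x_i,B): B\in\mathcal{B}(\mathcal{M}), i=1,\dots,k\}$ (the receiver knows the messages in $B$); $R_2=\{(y,\sum_{y_j\in C\setminus\{y\}}y_j): C\in\mathfrak{C}(\mathcal{M}), y\in C\}$ (the receiver knows only the single sum $\sum_{y_j\in C\setminus\{y\}}y_j\in\mathbb{F}_2$); $R_3=\{(y_i,X): i=1,\dots,m\}$ (the receiver knows all of $x_1,\dots,x_k$). A scalar linear index code of length $l$ over $\mathbb{F}_2$ is a linear map $f:\mathbb{F}_2^{m+k}\to\mathbb{F}_2^l$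 applied to the vector of all messages such that each receiver can compute its demanded message from its Has-set and $f$ of the messages. With $\mu$ the maximum number of receivers having the same Has-set, the code is perfect if $l=\mu$. *)

From mathcomp Require Import all_boot all_order all_algebra.
Set Implicit Arguments. Unset Strict Implicit. Unset Printing Implicit Defensive.
Import GRing.Theory.
Local Open Scope ring_scope.

Definition is_matroid (m : nat) (r : {set 'I_m} -> nat) : Prop :=
  [/\ forall S : {set 'I_m}, (r S <= #|S|)%N,
      forall S T : {set 'I_m}, S \subset T -> (r S <= r T)%N &
      forall S T : {set 'I_m}, (r (S :|: T) + r (S :&: T) <= r S + r T)%N].

Definition independent (m : nat) (r : {set 'I_m} -> nat) (S : {set 'I_m}) : bool :=
  r S == #|S|.

Definition is_basis (m : nat) (r : {set 'I_m} -> nat) (B : {set 'I_m}) : bool :=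
  independent r B && (r B == r setT).

Definition is_circuit (m : nat) (r : {set 'I_m} -> nat) (C : {set 'I_m}) : bool :=
  ~~ independent r C && [forall D : {set 'I_m}, (D \proper C) ==> independent r D].

Definition F2_representable (m : nat) (r : {set 'I_m} -> nat) : Prop :=
  exists (p : nat) (A : 'M['F_2]_(p, m)),
    forall S : {set 'I_m},
      \rank (colsub (fun j : 'I_#|S| => enum_val j) A) = r S.

(* Messages Z = Y u X are indexed by 'I_(m+k): y_j = lshift k j, x_i = rshift m i.
   A Has-set is a pair (b, S): if b = true the receiver knows the individual
   messages indexed by S; if b = false it knows only the single sum of the
   messages indexed by S. A receiver is a pair (demanded message, Has-set). *)
Definition hasset (m k : nat) := (bool * {set 'I_(m + k)})%type.
Definition receiver (m k : nat) := ('I_(m + k) * hasset m k)%type.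

Definition receivers (m k : nat) (r : {set 'I_m} -> nat) : {set receiver m k} :=
  [set rc : receiver m k |
     [exists B : {set 'I_m}, exists i : 'I_k,
        is_basis r B && (rc == (rshift m i, (true, lshift k @: B)))]
  ||
     [exists C : {set 'I_m}, exists y : 'I_m,
        [&& is_circuit r C, y \in C &
            rc == (lshift k y, (false, lshift k @: (C :\ y)))]]
  ||
     [exists j : 'I_m,
        rc == (lshift k j, (true, [set rshift m i | i : 'I_k]))]].

Definition mu (m k : nat) (r : {set 'I_m} -> nat) : nat :=
  \max_(rc in receivers k r)
     #|[set rc' in receivers k r | rc'.2 == rc.2]|.

Definition known (m k : nat) (h : hasset m k) (w : 'rV['F_2]_(m + k))
  : {ffun 'I_(m + k) -> 'F_2} :=
  if h.1 then [ffun z => if z \in h.2 then w 0 z else 0]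
  else [ffun _ => \sum_(z in h.2) w 0 z].

Definition decodes (m k l : nat) (F : 'M['F_2]_(m + k, l)) (rc : receiver m k) : Prop :=
  exists dec : {ffun 'I_(m + k) -> 'F_2} -> 'rV['F_2]_l -> 'F_2,
    forall w : 'rV['F_2]_(m + k), dec (known rc.2 w) (w *m F) = w 0 rc.1.

Definition is_index_code (m k l : nat) (r : {set 'I_m} -> nat) (F : 'M['F_2]_(m + k, l)) : Prop :=
  forall rc, rc \in receivers k r -> decodes F rc.

Definition has_perfect_scalar_linear_code (m k : nat) (r : {set 'I_m} -> nat) : Prop :=
  exists F : 'M['F_2]_(m + k, mu k r), is_index_code r F.

From mathcomp Require Import all_boot all_order all_algebra.
Set Implicit Arguments. Unset Strict Implicit. Unset Printing Implicit Defensive.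
Import GRing.Theory.

(* A linear code lets a receiver decode iff its demand vanishes on every
   message that is encoded to 0 and looks like 0 to that receiver.  The m
   receivers knowing all of X share one Has-set and no Has-set is shared by
   more receivers, so mu = m.  From a k x m representation A, the code
   (y, x) |-> y + x A works: an R1 receiver recovers x from the independent
   columns of a basis, and an R2 receiver uses that over F_2 the column of
   its demand y in a circuit C is the sum of the other columns of C.
   Conversely, for a code y F_Y + x F_X of length m the R3 receivers force
   F_Y to be invertible, so the messages encoded to 0 are (x A, x) with
   A = - F_X F_Y^-1; decodability at R1 and R2 receivers then says that the
   columns of A indexed by a basis are independent and that each column of a
   circuit lies in the span of the others, which pins down the rank function
   of the columns of A as r. *)

Section Matroid.

Variables (m : nat) (r : {set 'I_m} -> nat).
Hypothesis r_matroid : is_matroid r.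
Implicit Types (S T I J C D : {set 'I_m}) (e : 'I_m).

Lemma matroid_rank_le_card S : r S <= #|S|.
Proof. by case: r_matroid. Qed.

Lemma matroid_rankS S T : S \subset T -> r S <= r T.
Proof. by case: r_matroid => _ + _; apply. Qed.

Lemma matroid_rank_submod S T : r (S :|: T) + r (S :&: T) <= r S + r T.
Proof. by case: r_matroid. Qed.

Lemma matroid_rank0 : r set0 = 0.
Proof. by apply/eqP; rewrite -leqn0 -(cards0 'I_m) matroid_rank_le_card. Qed.

Lemma matroid_rankU1 S e : r (e |: S) <= (r S).+1.
Proof.
have := matroid_rank_submod S [set e]; rewrite setUC => /(leq_trans (leq_addr _ _)).
move/leq_trans; apply; rewrite -addn1 leq_add2l.
by have := matroid_rank_le_card [set e]; rewrite cards1.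
Qed.

Lemma independent_subset I J : independent r I -> J \subset I -> independent r J.
Proof.
move=> /eqP rI sJI; rewrite /independent eqn_leq matroid_rank_le_card /=.
have := matroid_rank_submod (I :&: J) (I :\: J).
rewrite setID => /(leq_trans (leq_addr _ _)).
rewrite rI -{1}(cardsID J I) (setIidPr sJI).
by move/leq_trans/(_ (leq_add (leqnn _) (matroid_rank_le_card _))); rewrite leq_add2r.
Qed.

Lemma independent_setU1 I e :
  independent r I -> r (e |: I) != r I -> independent r (e |: I).
Proof.
move=> /eqP rI neq; have eI : e \notin I.
  by apply: contra neq => eI; rewrite (setUidPr _) ?sub1set.
rewrite /independent cardsU1 eI add1n -rI eqn_leq matroid_rankU1 /=.
by rewrite ltn_neqAle eq_sym neq matroid_rankS ?subsetUr.
Qed.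

Lemma rank_closure J S :
  J \subset S -> {in S, forall e, r (e |: J) = r J} -> r S = r J.
Proof.
move=> sJS closed.
suff rsJ s : {subset s <= S} -> r ([set:: s] :|: J) = r J.
  by rewrite -(rsJ (enum S)) ?set_enum ?(setUidPl sJS) // => e; rewrite mem_enum.
elim: s => [|e s IH] sS; first by rewrite set_nil set0U.
have eS : e \in S by apply: sS; rewrite mem_head.
set X := [set:: s] :|: J; rewrite set_cons -setUA -/X.
have /IH rX : {subset s <= S} by move=> x xs; apply: sS; rewrite inE xs orbT.
have sJeX : J \subset e |: X by rewrite /X setUA subsetUr.
apply/eqP; rewrite eqn_leq (matroid_rankS sJeX) andbT.
have sJX : J \subset X := subsetUr _ _.
rewrite -(leq_add2r (r J)); have := matroid_rank_submod X (e |: J).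
rewrite setUCA (setUidPl sJX) closed // rX; apply: leq_trans.
by rewrite leq_add2l matroid_rankS // subsetI sJX subsetUr.
Qed.

Lemma independent_extend I S : independent r I -> I \subset S ->
  exists J, [/\ independent r J, I \subset J, J \subset S & r J = r S].
Proof.
move=> indI sIS.
pose P J := [&& independent r J, I \subset J & J \subset S].
have PI : P I by rewrite /P indI subxx.
case: (arg_maxnP (fun J => #|J|) PI) => J /and3P[indJ sIJ sJS] maxJ.
exists J; split=> //; apply/esym/rank_closure => // e eS.
apply/eqP; apply: contraT => neq; have indeJ := independent_setU1 indJ neq.
have eJ : e \notin J by apply: contra neq => eJ; rewrite (setUidPr _) ?sub1set.
have := maxJ (e |: J); rewrite /P indeJ (subset_trans sIJ (subsetUr _ _)).
by rewrite subUset sub1set eS sJS cardsU1 eJ => /(_ isT) /=; rewrite ltnn.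
Qed.

Lemma circuit_exists I e : independent r I -> ~~ independent r (e |: I) ->
  exists2 C, is_circuit r C & e \in C /\ C \subset e |: I.
Proof.
move=> indI depeI.
pose P D := (D \subset e |: I) && ~~ independent r D.
have PeI : P (e |: I) by rewrite /P subxx.
case: (arg_minnP (fun D => #|D|) PeI) => C /andP[sCeI depC] minC.
have properC D : D \proper C -> independent r D.
  move=> DC; apply: contraTT (proper_card DC) => depD.
  by rewrite -leqNgt minC // /P depD (subset_trans (proper_sub DC)).
exists C; first by rewrite /is_circuit depC; apply/forallP => D; apply/implyP/properC.
split=> //; apply: contraTT depC => eC; rewrite negbK (independent_subset indI) //.
apply/subsetP => x xC; have /setU1P[xe|//] := subsetP sCeI x xC.
by rewrite -xe xC in eC.
Qed.

Lemma circuit_independentD1 C e :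
  is_circuit r C -> e \in C -> independent r (C :\ e).
Proof.
by case/andP=> _ /forallP/(_ (C :\ e))/implyP minC eC; apply/minC/properD1.
Qed.

Lemma circuit_rankD1 C e : is_circuit r C -> e \in C -> r (C :\ e) = r C.
Proof.
move=> circC eC; have /eqP indCe := circuit_independentD1 circC eC.
apply/eqP; rewrite eqn_leq matroid_rankS ?subD1set //= indCe.
have := matroid_rank_le_card C; rewrite (cardsD1 e C) eC add1n leq_eqVlt ltnS.
case/orP=> // /eqP rC; case/andP: circC => /negP[].
by rewrite /independent rC (cardsD1 e C) eC.
Qed.

Lemma circuit_minimal C D :
  is_circuit r C -> D \subset C -> ~~ independent r D -> D = C.
Proof.
case/andP=> _ /forallP minC sDC; apply: contraNeq => neqDC.
by have /implyP := minC D; apply; rewrite properEneq neqDC.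
Qed.

End Matroid.

Local Open Scope ring_scope.

Definition rowset (F : fieldType) m n (H : 'M[F]_(m, n)) (S : {set 'I_m}) :
    'M[F]_(#|S|, n) :=
  rowsub (fun j : 'I_#|S| => enum_val j) H.

Section Rowset.

Variables (F : fieldType) (m n : nat) (H : 'M[F]_(m, n)).
Implicit Types (S T : {set 'I_m}).

Lemma row_sub_rowset S j : j \in S -> (row j H <= rowset H S)%MS.
Proof.
by move=> jS; rewrite -(enum_rankK_in jS jS) -row_rowsub row_sub.
Qed.

Lemma rowset_subP p S (M : 'M_(p, n)) :
  reflect {in S, forall j, (row j H <= M)%MS} (rowset H S <= M)%MS.
Proof.
apply: (iffP idP) => [sSM j /row_sub_rowset/submx_trans-> // | sSM].
by apply/row_subP => i; rewrite row_rowsub sSM ?enum_valP.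
Qed.

Lemma rowsetS S T : S \subset T -> (rowset H S <= rowset H T)%MS.
Proof. by move=> sST; apply/rowset_subP => j /(subsetP sST)/row_sub_rowset. Qed.

Lemma rank_rowsetT : \rank (rowset H setT) = \rank H.
Proof.
apply/eqP; rewrite eqn_leq mxrankS ?rowsub_sub //=.
by rewrite mxrankS //; apply/row_subP => j; rewrite row_sub_rowset ?inE.
Qed.

Lemma rank_rowsetU S T :
  (\rank (rowset H (S :|: T)) <= \rank (rowset H S) + \rank (rowset H T))%N.
Proof.
apply: leq_trans (mxrank_adds_leqif _ _).1; apply: mxrankS.
apply/rowset_subP => j /setUP[] /row_sub_rowset sj.
  exact: submx_trans sj (addsmxSl _ _).
exact: submx_trans sj (addsmxSr _ _).
Qed.

Lemma rank_rowset_subset_full S T : S \subset T ->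
  \rank (rowset H T) = #|T| -> \rank (rowset H S) = #|S|.
Proof.
move=> sST rT; apply/eqP; rewrite eqn_leq rank_leq_row /=.
have := rank_rowsetU (T :&: S) (T :\: S).
rewrite setID rT -{1}(cardsID S T) (setIidPr sST).
by move/leq_trans/(_ (leq_add (leqnn _) (rank_leq_row _))); rewrite leq_add2r.
Qed.

Lemma rank_rowset_matroid (r : {set 'I_m} -> nat) : is_matroid r ->
    (forall B, is_basis r B -> \rank (rowset H B) = #|B|) ->
    (forall C e, is_circuit r C -> e \in C -> (row e H <= rowset H (C :\ e))%MS) ->
  forall S, \rank (rowset H S) = r S.
Proof.
move=> r_matroid basis_free circuit_dep S.
have ind0 : independent r set0 by rewrite /independent cards0 matroid_rank0.
have [J [indJ _ sJS rJS]] := independent_extend r_matroid ind0 (sub0set S).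
have [B [indB sJB _ rBT]] := independent_extend r_matroid indJ (subsetT J).
have rkJ : \rank (rowset H J) = #|J|.
  apply: rank_rowset_subset_full sJB (basis_free B _).
  by rewrite /is_basis indB rBT eqxx.
have sSJ : (rowset H S <= rowset H J)%MS.
  apply/rowset_subP => e eS.
  have [eJ|eJ] := boolP (e \in J); first exact: row_sub_rowset.
  have rkeJ : (r (e |: J) <= #|J|)%N.
    by rewrite -(eqP indJ) rJS (matroid_rankS r_matroid) // subUset sub1set eS.
  have depeJ : ~~ independent r (e |: J).
    by rewrite /independent cardsU1 eJ add1n ltn_eqF.
  have [C circC [eC sCeJ]] := circuit_exists r_matroid indJ depeJ.
  apply: submx_trans (circuit_dep C e circC eC) (rowsetS _).
  apply/subsetP => x /setD1P[xe /(subsetP sCeJ)/setU1P[xe'|//]].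
  by rewrite xe' eqxx in xe.
apply/eqP; rewrite eqn_leq -rJS (eqP indJ) -rkJ mxrankS //=.
by rewrite mxrankS ?rowsetS.
Qed.

End Rowset.

Lemma rV_submx_annihilator (F : fieldType) n (u v : 'rV[F]_n) :
  (forall z : 'cV_n, (u *m z) 0 0 = 0 -> (v *m z) 0 0 = 0) -> (v <= u)%MS.
Proof.
move=> uv; rewrite submxE; apply/eqP/rowP => j; rewrite [RHS]mxE.
have entry (w : 'rV_n) : (w *m col j (cokermx u)) 0 0 = (w *m cokermx u) 0 j.
  by rewrite !mxE; apply: eq_bigr => i _; rewrite mxE.
by rewrite -entry uv // entry mulmx_coker mxE.
Qed.

Lemma rowset_F2_span m n (H : 'M['F_2]_(m, n)) (S : {set 'I_m}) (u : 'rV_n) :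
    (u <= rowset H S)%MS ->
  exists2 D : {set 'I_m}, D \subset S & u = \sum_(j in D) row j H.
Proof.
case/submxP => v ->; rewrite mulmx_sum_row.
exists [set enum_val i | i : 'I_#|S| & v 0 i == 1].
  by apply/subsetP => _ /imsetP[i _ ->]; apply: enum_valP.
rewrite big_imset /=; last by move=> i i' _ _; apply: enum_val_inj.
rewrite (bigID (fun i => v 0 i == 1)) /= [X in _ + X]big1 ?addr0.
  by apply: eq_big => [i|i /eqP vi]; rewrite ?inE // row_rowsub vi scale1r.
move=> i; case: (v 0 i) => -[|[|//]] // lt02 _.
by rewrite (_ : Ordinal lt02 = 0) ?scale0r //; apply/val_inj.
Qed.

Lemma circuit_row_sum m n (H : 'M['F_2]_(m, n)) (r : {set 'I_m} -> nat) :
    is_matroid r -> (forall S, \rank (rowset H S) = r S) ->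
  forall C e, is_circuit r C -> e \in C -> row e H = \sum_(j in C :\ e) row j H.
Proof.
move=> r_matroid Hr C e circC eC.
have eCe : (row e H <= rowset H (C :\ e))%MS.
  have sCeC := rowsetS H (subD1set C e).
  have : (rowset H C <= rowset H (C :\ e))%MS.
    by rewrite -(mxrank_leqif_sup sCeC).2 !Hr circuit_rankD1.
  exact/submx_trans/row_sub_rowset.
have [D sDCe eDsum] := rowset_F2_span eCe.
have eD : e \notin D by apply/negP => /(subsetP sDCe); rewrite !inE eqxx.
have depeD : ~~ independent r (e |: D).
  have rk_eD : (\rank (rowset H (e |: D)) <= #|D|)%N.
    apply: leq_trans (rank_leq_row (rowset H D)); apply/mxrankS/rowset_subP.
    move=> j /setU1P[->|/row_sub_rowset //]; rewrite eDsum.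
    by apply: summx_sub => i iD; apply: row_sub_rowset.
  rewrite /independent -Hr; apply: contraTneq rk_eD => ->.
  by rewrite cardsU1 eD add1n ltnn.
have sEDC : e |: D \subset C.
  by rewrite subUset sub1set eC (subset_trans sDCe (subD1set _ _)).
by rewrite -(circuit_minimal circC sEDC depeD) setU1K.
Qed.

Section Knowledge.

Variables (m k : nat).
Implicit Types (h : hasset m k) (S : {set 'I_(m + k)}) (d w : 'rV['F_2]_(m + k)).

Lemma known0 h : known h 0 = 0.
Proof.
case: h => -[] S; apply/ffunP => z; rewrite !ffunE /=; first by rewrite mxE if_same.
by rewrite big1 // => i _; rewrite mxE.
Qed.

Lemma knownB h w1 w2 : known h (w1 - w2) = known h w1 - known h w2.
Proof.
case: h => -[] S; apply/ffunP => z; rewrite !ffunE /=.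
  by case: ifP; rewrite ?subr0 // !mxE.
by rewrite -sumrB; apply: eq_bigr => i _; rewrite !mxE.
Qed.

Lemma known_true_eq0 S d : known (true, S) d = 0 <-> {in S, forall z, d 0 z = 0}.
Proof.
split=> [/ffunP d0 z zS | dS0]; first by have := d0 z; rewrite !ffunE /= zS.
by apply/ffunP => z; rewrite !ffunE /=; case: ifP => // /dS0.
Qed.

(* [known (false, S) d] is a constant function; [z0] is any point to evaluate it at. *)
Lemma known_false_eq0 S d (z0 : 'I_(m + k)) :
  known (false, S) d = 0 <-> \sum_(z in S) d 0 z = 0.
Proof.
split=> [/ffunP/(_ z0) | dS0]; first by rewrite !ffunE.
by apply/ffunP => z; rewrite !ffunE.
Qed.

Lemma decodesP l (F : 'M['F_2]_(m + k, l)) (rc : receiver m k) :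
  decodes F rc <->
  forall d, known rc.2 d = 0 -> d *m F = 0 -> d 0 rc.1 = 0.
Proof.
split=> [[dec decE] d d0 dF | ker0].
  by rewrite -decE d0 dF -(known0 rc.2) -(mul0mx 1 F) decE mxE.
exists (fun kn c => if [pick w | (known rc.2 w == kn) && (w *m F == c)] is Some w
                   then w 0 rc.1 else 0) => w.
case: pickP => [w' /andP[/eqP kw' /eqP w'F] | /(_ w)]; last by rewrite !eqxx.
have := ker0 (w' - w); rewrite knownB kw' mulmxBl w'F !subrr !mxE.
by move=> /(_ erefl erefl)/eqP; rewrite subr_eq0 => /eqP.
Qed.

End Knowledge.

Definition represents (F : fieldType) p m (A : 'M[F]_(p, m))
    (r : {set 'I_m} -> nat) :=
  forall S : {set 'I_m}, \rank (colsub (fun j : 'I_#|S| => enum_val j) A) = r S.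

Lemma rank_colsub_rowset (F : fieldType) p m (A : 'M[F]_(p, m)) (S : {set 'I_m}) :
  \rank (colsub (fun j : 'I_#|S| => enum_val j) A) = \rank (rowset A^T S).
Proof. by rewrite -mxrank_tr; congr (\rank _); apply/matrixP => i j; rewrite !mxE. Qed.

Lemma representsE (F : fieldType) p m (A : 'M[F]_(p, m)) r :
  represents A r <-> forall S, \rank (rowset A^T S) = r S.
Proof. by split=> Ar S; rewrite -Ar rank_colsub_rowset. Qed.

Lemma rank_representation (F : fieldType) p m (A : 'M[F]_(p, m)) r :
  represents A r -> \rank A = r setT.
Proof. by move/representsE/(_ setT); rewrite rank_rowsetT mxrank_tr. Qed.

Lemma represents_row_base (F : fieldType) p m (A : 'M[F]_(p, m)) r :
  represents A r -> represents (row_base A) r.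
Proof.
have colsubE n (M : 'M[F]_(n, m)) S :
    colsub (fun j : 'I_#|S| => enum_val j) M
    = M *m colsub (fun j => enum_val j) 1%:M.
  by rewrite mulmx_colsub mulmx1.
by move=> Ar S; rewrite colsubE (eqmxMr _ (eq_row_base A)) -colsubE.
Qed.

Lemma mulmx_entry_tr_row (R : comPzRingType) n p (x : 'rV[R]_n) (A : 'M_(n, p)) j :
  (x *m A) 0 j = (row j A^T *m x^T) 0 0.
Proof. by rewrite !mxE; apply: eq_bigr => i _; rewrite !mxE mulrC. Qed.

Section Receivers.

Variables (m k : nat) (r : {set 'I_m} -> nat).

Local Notation xmsgs := [set rshift m i | i : 'I_k].

Variant receiver_spec (rc : receiver m k) : Prop :=
  | RecvBasis B i of is_basis r B & rc = (rshift m i, (true, lshift k @: B))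
  | RecvCircuit C y of is_circuit r C & y \in C &
      rc = (lshift k y, (false, lshift k @: (C :\ y)))
  | RecvAllX j of rc = (lshift k j, (true, xmsgs)).

Lemma receiversP rc : reflect (receiver_spec rc) (rc \in receivers k r).
Proof.
rewrite inE -orbA; apply: (iffP or3P) => [[]|[B i basB ->|C y circC yC ->|j ->]].
- by case/existsP=> B /existsP[i /andP[basB /eqP->]]; apply: RecvBasis basB erefl.
- case/existsP=> C /existsP[y /and3P[circC yC /eqP->]].
  exact: RecvCircuit circC yC erefl.
- by case/existsP=> j /eqP->; apply: RecvAllX j erefl.
- by apply: Or31; apply/existsP; exists B; apply/existsP; exists i; rewrite basB eqxx.
- apply: Or32; apply/existsP; exists C; apply/existsP; exists y.
  by rewrite circC yC eqxx.
- by apply: Or33; apply/existsP; exists j.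
Qed.

(* Only R1 Has-sets consist of individually known messages and miss some x_i. *)
Lemma receiver_demand rc : rc \in receivers k r ->
  rc.1 \in (if rc.2.1 && ~~ (xmsgs \subset rc.2.2) then xmsgs
            else [set lshift k j | j : 'I_m]).
Proof.
case/receiversP=> [B i _ | C y _ _ | j] -> /=; first last.
- by rewrite subxx imset_f.
- by rewrite imset_f.
suff -> : xmsgs \subset lshift k @: B = false by rewrite imset_f.
have xi : rshift m i \in xmsgs by apply: imset_f.
apply/negP => /subsetP/(_ _ xi)/imsetP[j _ rij].
by have := eq_rlshift i j; rewrite rij eqxx.
Qed.

Lemma card_hasset_class (h : hasset m k) : (k <= m)%N ->
  (#|[set rc in receivers k r | rc.2 == h]| <= m)%N.
Proof.
move=> km; pose demands := if h.1 && ~~ (xmsgs \subset h.2) then xmsgs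
                           else [set lshift k j | j : 'I_m].
have: [set rc in receivers k r | rc.2 == h] \subset setX demands [set h].
  apply/subsetP => -[y h'] /setIdP[rcR /eqP /= h'h].
  have := receiver_demand rcR; rewrite /= h'h => dem.
  by rewrite in_setX /= set11 andbT.
move/subset_leq_card; rewrite cardsX cards1 muln1 => /leq_trans; apply.
rewrite /demands; case: ifP => _; rewrite card_imset ?card_ord //.
  exact: rshift_inj.
exact: lshift_inj.
Qed.

Lemma mu_receivers : (k <= m)%N -> mu k r = m.
Proof.
move=> km; apply/eqP; rewrite eqn_leq; apply/andP; split.
  by apply/bigmax_leqP => rc _; apply: card_hasset_class.
have sent_inj : injective (fun j : 'I_m => (lshift k j, (true, xmsgs))).
  by move=> j j' [/val_inj].
have : (m <= #|[set rc in receivers k r | rc.2 == (true, xmsgs)]|)%N.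
  rewrite -{1}[m]card_ord -(card_imset _ sent_inj); apply/subset_leq_card/subsetP.
  move=> _ /imsetP[j _ ->]; apply/setIdP; split=> //.
  by apply/receiversP; apply: RecvAllX j erefl.
move/leq_trans; apply.
have [->|[rc]] := set_0Vmem [set rc in receivers k r | rc.2 == (true, xmsgs)].
  by rewrite cards0.
by case/setIdP=> rcR /eqP <-; apply: leq_bigmax_cond.
Qed.

End Receivers.

Section IndexCode.

Variables (m k : nat) (r : {set 'I_m} -> nat).
Hypotheses (r_matroid : is_matroid r) (r_setT : r setT = k).

Lemma index_code_of_representation (A : 'M['F_2]_(k, m)) :
  represents A r -> is_index_code r (col_mx 1%:M A).
Proof.
move=> Ar rc /receiversP rc_spec; apply/decodesP => d.
have [y [x ->]] : exists y x, d = row_mx y x.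
  by exists (lsubmx d), (rsubmx d); rewrite hsubmxK.
move=> d0; rewrite mul_row_col mulmx1 => /eqP; rewrite addr_eq0 => /eqP yE.
case: rc_spec d0 => [B i basB | C e circC eC | j] -> /=.
- move/known_true_eq0 => yB0; rewrite row_mxEr.
  have free_B : row_free (colsub (fun j : 'I_#|B| => enum_val j) A).
    by rewrite /row_free Ar; case/andP: basB => _ /eqP->; rewrite r_setT.
  suff /eqP : x *m colsub (fun j : 'I_#|B| => enum_val j) A = 0.
    by rewrite mulmx_free_eq0 // => /eqP->; rewrite mxE.
  apply/rowP => j; rewrite mulmx_colsub [LHS]mxE [RHS]mxE.
  have := yB0 (lshift k (enum_val j)) (imset_f _ (enum_valP j)).
  by rewrite row_mxEl yE mxE => /eqP; rewrite oppr_eq0 => /eqP.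
- move/(known_false_eq0 _ _ (lshift k e)).
  rewrite big_imset /=; last by move=> ? ? _ _; apply: lshift_inj.
  under eq_bigr do rewrite row_mxEl.
  move=> ysum; rewrite row_mxEl yE mxE mulmx_entry_tr_row.
  rewrite (circuit_row_sum r_matroid _ circC eC); last exact/representsE.
  rewrite mulmx_suml summxE -sumrN; apply: etrans ysum; apply: eq_bigr => j _.
  by rewrite yE [RHS]mxE -mulmx_entry_tr_row.
- move/known_true_eq0 => x0; rewrite row_mxEl yE.
  suff -> : x = 0 by rewrite mul0mx oppr0 mxE.
  apply/rowP => i; rewrite [RHS]mxE -(row_mxEr y) x0 //; exact: imset_f.
Qed.

Lemma representation_of_index_code (F : 'M['F_2]_(m + k, m)) :
  is_index_code r F -> represents (- (dsubmx F *m invmx (usubmx F))) r.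
Proof.
move=> code; set FY := usubmx F; set FX := dsubmx F; set A := - (FX *m _).
have decode rc : receiver_spec r rc ->
    forall d, known rc.2 d = 0 -> d *m F = 0 -> d 0 rc.1 = 0.
  by move/receiversP/code/decodesP.
have mulF y x : row_mx y x *m F = y *m FY + x *m FX.
  by rewrite -{1}(vsubmxK F) mul_row_col.
have FY_unit : FY \in unitmx.
  rewrite -row_free_unit; apply/inj_row_free => y yFY; apply/rowP => j.
  have := decode _ (RecvAllX r (j := j) erefl) (row_mx y 0).
  rewrite /= row_mxEl mxE; apply.
    by apply/known_true_eq0 => _ /imsetP[i _ ->]; rewrite row_mxEr mxE.
  by rewrite mulF yFY mul0mx addr0.
have mulFA z : row_mx (z *m A) z *m F = 0.
  by rewrite mulF mulmxN mulNmx -!mulmxA mulVmx // mulmx1 addNr.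
apply/representsE/rank_rowset_matroid => // [B basB | C e circC eC].
  have cardB : #|B| = k by case/andP: (basB) => /eqP <- /eqP ->.
  rewrite -rank_colsub_rowset; transitivity k => //.
  apply/eqP/inj_row_free => z zAB; apply/rowP => i.
  have := decode _ (RecvBasis (i := i) basB erefl) (row_mx (z *m A) z).
  rewrite /= row_mxEr mxE; apply=> //; apply/known_true_eq0 => _ /imsetP[j jB ->].
  move/rowP: zAB => /(_ (enum_rank_in jB j)).
  by rewrite row_mxEl mulmx_colsub !mxE enum_rankK_in.
pose u := \sum_(j in C :\ e) row j A^T.
have u_sub : (u <= rowset A^T (C :\ e))%MS.
  by apply: summx_sub => j jCe; apply: row_sub_rowset.
apply: submx_trans u_sub; apply: rV_submx_annihilator => z u0.
have := decode _ (RecvCircuit circC eC erefl) (row_mx (z^T *m A) z^T).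
rewrite /= row_mxEl mulmx_entry_tr_row trmxK; apply=> //.
apply/(known_false_eq0 _ _ (lshift k e)).
rewrite big_imset /=; last by move=> ? ? _ _; apply: lshift_inj.
apply: etrans u0; rewrite mulmx_suml summxE; apply: eq_bigr => j _.
by rewrite row_mxEl mulmx_entry_tr_row trmxK.
Qed.

End IndexCode.

Unset Implicit Arguments.

Theorem theorem3 (m k : nat) (r : {set 'I_m} -> nat) :
  is_matroid r -> r setT = k ->
  (F2_representable r <-> has_perfect_scalar_linear_code k r).
Proof.
move=> r_matroid r_setT.
have km : (k <= m)%N.
  by have := matroid_rank_le_card r_matroid setT; rewrite cardsT card_ord r_setT.
rewrite /has_perfect_scalar_linear_code (mu_receivers r km).
split=> [[p [A Ar]] | [F code]].
  move: (row_base A) (represents_row_base Ar).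
  rewrite (rank_representation Ar) r_setT => X Xr.
  by exists (col_mx 1%:M X); apply: index_code_of_representation.
exists k, (- (dsubmx F *m invmx (usubmx F))).
exact: representation_of_index_code.
Qed.
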